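(* Let $M$ be a finite monoid. The following are equivalent: (1) the relation $x\le_1 y \iff R(x)\subseteq R(xy)$ is total on $M$ (for all $x,y$, $x\le_1y$ or $y\le_1x$); (2) the relation $x\le_2 y\iff L(x)\subseteq L(yx)$ is total on $M$; (3) the relation $x\le_3 y\iff J(x)=J(xy)=J(yx)$ is total on $M$; (4) the two-sided ideals $J(x)$, $x\in M$, are totally ordered by inclusion, and $J(xy)=J(x)\cap J(y)$ for all $x,y\in M$. Whenever one of these holds, the relations $\le_1,\le_2,\le_3$ coincide. Furthermore, if $M$ is a submonoid of the monoid of endofunctions of a finite set $Q$ (with product $fg=f\circ g$), then these conditions are equivalent to: for all $f,g\in M$, $f\sqsubseteq g$ or $g\sqsubseteq f$, where $f\sqsubseteq g$ iff $\mathrm{Im}(f)\subseteq\mathrm{Im}(f\circ g)$.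
   Context: For $m$ in a monoid $M$: $J(m)=\{xmy: x,y\in M\}$ (two-sided ideal), $L(m)=\{xm:x\in M\}$ (left ideal), $R(m)=\{my:y\in M\}$ (right ideal). $\mathrm{Im}(f)$ denotes the image of a function $f$. *)

(* A (sub)monoid is given by a carrier predicate M on a
   type T, a multiplication and a unit; ideals are taken inside M. *)
From mathcomp Require Import all_boot.
Set Implicit Arguments. Unset Strict Implicit. Unset Printing Implicit Defensive.

Section MonoidRel.
Variables (T : Type) (M : pred T) (mul : T -> T -> T).

Definition is_monoid (one : T) : Prop :=
  [/\ M one,
      (forall x y, M x -> M y -> M (mul x y)),
      (forall x y z, M x -> M y -> M z -> mul x (mul y z) = mul (mul x y) z),
      (forall x, M x -> mul one x = x) &
      (forall x, M x -> mul x one = x)].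

Definition Jid (m : T) : T -> Prop :=
  fun z => exists x y, [/\ M x, M y & z = mul (mul x m) y].
Definition Lid (m : T) : T -> Prop :=
  fun z => exists x, M x /\ z = mul x m.
Definition Rid (m : T) : T -> Prop :=
  fun z => exists y, M y /\ z = mul m y.

Definition subsetP (A B : T -> Prop) : Prop := forall z, A z -> B z.
Definition eqsetP (A B : T -> Prop) : Prop := forall z, A z <-> B z.

Definition le1 (x y : T) : Prop := subsetP (Rid x) (Rid (mul x y)).
Definition le2 (x y : T) : Prop := subsetP (Lid x) (Lid (mul y x)).
Definition le3 (x y : T) : Prop :=
  eqsetP (Jid x) (Jid (mul x y)) /\ eqsetP (Jid (mul x y)) (Jid (mul y x)).

Definition total_on (r : T -> T -> Prop) : Prop :=
  forall x y, M x -> M y -> r x y \/ r y x.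

Definition cond4 : Prop :=
  (forall x y, M x -> M y -> subsetP (Jid x) (Jid y) \/ subsetP (Jid y) (Jid x)) /\
  (forall x y, M x -> M y ->
     eqsetP (Jid (mul x y)) (fun z => Jid x z /\ Jid y z)).
End MonoidRel.

Definition fcomp (Q : finType) (f g : {ffun Q -> Q}) : {ffun Q -> Q} :=
  [ffun q => f (g q)].
Definition fid (Q : finType) : {ffun Q -> Q} := [ffun q => q].
Definition Imf (Q : finType) (f : {ffun Q -> Q}) : {set Q} := [set f q | q : Q].
Definition sqle (Q : finType) (f g : {ffun Q -> Q}) : Prop :=
  Imf f \subset Imf (fcomp f g).

(* In a finite monoid, x = a x c forces x ∈ x c M: pick c^i = c^(i+n) with
   n > 0, then x = a^i x c^i = a^i x c^i c^n = x c^n.  Hence x ≤1 y iff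
   J(x) ⊆ J(xy).  Totality of ≤1 yields the chain property and
   J(xy) = J(x) ∩ J(y) (in the case y ≤1 x through J(y) ⊆ J(yx) = J(yxyx) ⊆ J(xy));
   conversely, under (4) both ≤1 and ≤3 become x ≤ y iff J(x) ⊆ J(y).
   The relation ≤2 is ≤1 of the opposite monoid, which has the same two-sided
   ideals.  For a monoid of maps, f = f g z gives Im f ⊆ Im (f g); conversely,
   if Im h ⊆ Im (h h) for h = f g, then h permutes Im h, so some power h^(n+1)
   fixes Im h ⊇ Im f and f = h (h^n f). *)

From Pilot Require Import Defs.
From Stdlib Require Import Setoid FunctionalExtensionality PropExtensionality.
From mathcomp Require Import all_boot.
Set Implicit Arguments. Unset Strict Implicit. Unset Printing Implicit Defensive.

Section Powers.
Variables (T : Type) (mul : T -> T -> T) (one : T).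
Hypotheses (mulA : associative mul) (mul1 : left_id one mul) (mulr1 : right_id one mul).

Definition pow c n := iter n (mul c) one.

Lemma pow0 c : pow c 0 = one.
Proof. by []. Qed.

Lemma powS c n : pow c n.+1 = mul c (pow c n).
Proof. by []. Qed.

Lemma powD c n m : pow c (n + m) = mul (pow c n) (pow c m).
Proof. by elim: n => [|n IHn]; rewrite ?pow0 ?mul1 // addSn !powS IHn mulA. Qed.

Lemma powSr c n : pow c n.+1 = mul (pow c n) c.
Proof. by rewrite -addn1 powD powS mulr1. Qed.

Lemma pow_sandwich a x c : x = mul (mul a x) c ->
  forall k, x = mul (mul (pow a k) x) (pow c k).
Proof.
move=> def_x; elim=> [|k IHk]; first by rewrite !pow0 mul1 mulr1.
by rewrite powS powSr {1}def_x {1}IHk !mulA.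
Qed.

End Powers.

Lemma pow_periodic (T : finType) (mul : T -> T -> T) (one c : T) :
  exists i n, pow mul one c i = pow mul one c (i + n.+1).
Proof.
have /trajectP [i lt_i_ord def_i] := looping_order (mul c) one.
by exists i, (order (mul c) one - i.+1); rewrite addnS -addSn subnKC.
Qed.

Lemma sandwich_right_stable (T : finType) (mul : T -> T -> T) (one : T) :
  associative mul -> left_id one mul -> right_id one mul ->
  forall a x c, x = mul (mul a x) c -> exists z, x = mul (mul x c) z.
Proof.
move=> mulA mul1 mulr1 a x c def_x.
have [i [n pow_i]] := pow_periodic mul one c.
have def_xi := pow_sandwich mulA mul1 mulr1 def_x i.
exists (pow mul one c n).
by rewrite {1}def_xi pow_i (powD mulA mul1) powS !mulA -def_xi.
Qed.

Lemma le1P (T : Type) (M : pred T) (mul : T -> T -> T) (one : T) x y :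
  is_monoid M mul one -> M x -> M y ->
  le1 M mul x y <-> exists2 z, M z & x = mul (mul x y) z.
Proof.
case=> M1 MM mulA _ mulr1 Mx My; split=> [le_xy | [z Mz def_x] _ [w [Mw ->]]].
  have Rx_x : Rid M mul x x by exists one; rewrite mulr1.
  by have [z [Mz def_x]] := le_xy x Rx_x; exists z.
exists (mul z w); split; first exact: MM.
by rewrite {1}def_x -!mulA ?MM.
Qed.

Lemma is_monoidT_laws (T : Type) (mul : T -> T -> T) (one : T) :
  is_monoid predT mul one ->
  [/\ associative mul, left_id one mul & right_id one mul].
Proof. by case=> _ _ mulA mul1 mulr1; split=> [x y z|x|x]; [exact: mulA|exact: mul1|exact: mulr1]. Qed.

Section FiniteMonoid.
Variables (T : finType) (mul : T -> T -> T) (one : T).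
Hypothesis monoidT : is_monoid predT mul one.

Let mulA : associative mul. Proof. by case: (is_monoidT_laws monoidT). Qed.
Let mul1 : left_id one mul. Proof. by case: (is_monoidT_laws monoidT). Qed.
Let mulr1 : right_id one mul. Proof. by case: (is_monoidT_laws monoidT). Qed.

Local Notation J := (Jid predT mul).
Local Notation Jle x y := (Defs.subsetP (J x) (J y)).

Lemma JidP m z : J m z <-> exists a b, z = mul (mul a m) b.
Proof. by split=> [[a [b [_ _ ->]]] | [a [b ->]]]; exists a, b. Qed.

Lemma Jid_refl m : J m m.
Proof. by apply/JidP; exists one, one; rewrite mul1 mulr1. Qed.

Lemma JleP x y : Jle x y <-> exists a b, x = mul (mul a y) b.
Proof.
split=> [le_xy | [a [b def_x]] z /JidP [c [d ->]]].
  by apply/JidP/le_xy/Jid_refl.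
by apply/JidP; exists (mul c a), (mul b d); rewrite def_x !mulA.
Qed.

Lemma Jle_mid a m b : Jle (mul (mul a m) b) m.
Proof. by apply/JleP; exists a, b. Qed.

Lemma Jle_mulr x y : Jle (mul x y) y.
Proof. by rewrite -[mul x y]mulr1; apply: Jle_mid. Qed.

Lemma Jle_mull x y : Jle (mul x y) x.
Proof. by rewrite -[mul x y]mul1 mulA; apply: Jle_mid. Qed.

Lemma le1E x y : le1 predT mul x y <-> exists z, x = mul (mul x y) z.
Proof.
split=> [/(le1P monoidT isT isT) [z _] | [z def_x]]; first by exists z.
by apply/(le1P monoidT isT isT); exists z.
Qed.

Lemma le1_JleE x y : le1 predT mul x y <-> Jle x (mul x y).
Proof.
rewrite le1E JleP; split=> [[z def_x] | [a [b def_x]]]; first by exists one, z; rewrite mul1.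
have [z def_x'] : exists z, x = mul (mul x (mul y b)) z.
  by apply: (sandwich_right_stable mulA mul1 mulr1 (a := a)); rewrite {1}def_x !mulA.
by exists (mul b z); rewrite {1}def_x' !mulA.
Qed.

Lemma le1_Jle x y : le1 predT mul x y -> Jle x y.
Proof. by move/le1_JleE=> le_x_xy z /le_x_xy; apply: Jle_mulr. Qed.

Lemma total_le1_cond4 : total_on predT (le1 predT mul) -> cond4 predT mul.
Proof.
move=> tot; split=> [x y _ _ | x y _ _ z].
  by case: (tot x y isT isT) => /le1_Jle; [left | right].
split=> [Jxy_z | [Jx_z Jy_z]]; first by split; [exact: Jle_mull Jxy_z | exact: Jle_mulr Jxy_z].
case: (tot x y isT isT) => [/le1_JleE le_x_xy | /le1_JleE le_y_yx]; first exact: le_x_xy.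
have le_yx_xy : Jle (mul y x) (mul x y).
  have /le1_JleE le_yx_sq : le1 predT mul (mul y x) (mul y x).
    by case: (tot (mul y x) (mul y x) isT isT).
  have sq : mul (mul y x) (mul y x) = mul (mul y (mul x y)) x by rewrite !mulA.
  by move=> w /le_yx_sq; rewrite sq; apply: Jle_mid.
exact/le_yx_xy/le_y_yx.
Qed.

Lemma cond4_le1 : cond4 predT mul -> forall x y, le1 predT mul x y <-> Jle x y.
Proof.
move=> [_ Jmul] x y; split=> [|le_xy]; first exact: le1_Jle.
by apply/le1_JleE=> z Jx_z; apply/(Jmul x y isT isT z); split; last exact: le_xy.
Qed.

Lemma cond4_le3 : cond4 predT mul -> forall x y, le3 predT mul x y <-> Jle x y.
Proof.
move=> [_ Jmul] x y; have Jxy := Jmul x y isT isT; have Jyx := Jmul y x isT isT.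
split=> [[eq_x_xy _] z /eq_x_xy /Jxy [] // | le_xy].
split=> z; rewrite Jxy; last by rewrite Jyx; split=> [] [].
by split=> [Jx_z | [] //]; split; last exact: le_xy.
Qed.

Lemma le3_le1 x y : le3 predT mul x y -> le1 predT mul x y.
Proof. by move=> [eq_x_xy _]; apply/le1_JleE => z /eq_x_xy. Qed.

Lemma total_le1E : total_on predT (le1 predT mul) <-> cond4 predT mul.
Proof.
split=> [|C x y _ _]; first exact: total_le1_cond4.
by rewrite !cond4_le1 //; apply: C.1.
Qed.

Lemma total_le3E : total_on predT (le3 predT mul) <-> cond4 predT mul.
Proof.
split=> [tot | C x y _ _]; last by rewrite !cond4_le3 //; apply: C.1.
by apply/total_le1E => x y _ _; case: (tot x y isT isT) => /le3_le1; [left | right].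
Qed.

End FiniteMonoid.

Lemma is_monoid_op (T : Type) (M : pred T) (mul : T -> T -> T) (one : T) :
  is_monoid M mul one -> is_monoid M (fun x y => mul y x) one.
Proof.
case=> M1 MM mulA mul1 mulr1; split=> // [x y Mx My | x y z Mx My Mz].
  exact: MM.
by rewrite mulA.
Qed.

Section Opposite.
Variables (T : finType) (mul : T -> T -> T) (one : T).
Hypothesis monoidT : is_monoid predT mul one.
Local Notation mulop := (fun x y => mul y x).

Lemma le2_op : le2 predT mul = le1 predT mulop.
Proof. by []. Qed.

Lemma Jid_op : Jid predT mulop = Jid predT mul.
Proof.
have [mulA _ _] := is_monoidT_laws monoidT.
apply: functional_extensionality => m; apply: functional_extensionality => z.
apply: propositional_extensionality.
by split=> [] [a [b [_ _ ->]]]; exists b, a; rewrite mulA.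
Qed.

Lemma cond4_op : cond4 predT mulop <-> cond4 predT mul.
Proof.
rewrite /cond4 Jid_op.
by split=> [] [Jchain Jmul]; split=> // x y _ _ z; rewrite (Jmul y x isT isT z); split=> [] [].
Qed.

Lemma total_le2E : total_on predT (le2 predT mul) <-> cond4 predT mul.
Proof. by rewrite le2_op -cond4_op; apply: total_le1E (is_monoid_op monoidT). Qed.

Lemma cond4_le2 : cond4 predT mul ->
  forall x y, le2 predT mul x y <-> Defs.subsetP (Jid predT mul x) (Jid predT mul y).
Proof. by rewrite le2_op -cond4_op -Jid_op; apply: cond4_le1 (is_monoid_op monoidT). Qed.

End Opposite.

Lemma pow_in (T : Type) (M : pred T) (mul : T -> T -> T) (one c : T) n :
  is_monoid M mul one -> M c -> M (pow mul one c n).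
Proof. by case=> M1 MM _ _ _ Mc; elim: n => [|n IHn] //; apply: MM. Qed.

Section FunctionMonoid.
Variable Q : finType.
Implicit Types f g h : {ffun Q -> Q}.
Local Notation fpow := (pow (@fcomp Q) (fid Q)).

Lemma fcompA : associative (@fcomp Q).
Proof. by move=> f g h; apply/ffunP => q; rewrite !ffunE. Qed.

Lemma fid_comp : left_id (fid Q) (@fcomp Q).
Proof. by move=> f; apply/ffunP => q; rewrite !ffunE. Qed.

Lemma comp_fid : right_id (fid Q) (@fcomp Q).
Proof. by move=> f; apply/ffunP => q; rewrite !ffunE. Qed.

Lemma Imf_comp f g : Imf (fcomp f g) = f @: Imf g.
Proof.
apply/setP => q; apply/imsetP/imsetP => [[p _ ->] | [_ /imsetP [p _ ->] ->]].
  by exists (g p); rewrite ?ffunE // imset_f.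
by exists p; rewrite ?ffunE.
Qed.

Lemma Imf_compS f g : Imf (fcomp f g) \subset Imf f.
Proof. by rewrite Imf_comp; apply/subsetP => _ /imsetP [q _ ->]; apply: imset_f. Qed.

Lemma Imf_pow h k : sqle h h -> Imf h \subset Imf (fpow h k.+1).
Proof.
move=> le_hh; elim: k => [|k IHk]; first by rewrite powS comp_fid.
apply: subset_trans le_hh _.
by rewrite [fpow h _.+1]powS !Imf_comp imsetS // -Imf_comp.
Qed.

Lemma pow_fix_Imf h : sqle h h -> exists n, {in Imf h, forall q, fpow h n.+1 q = q}.
Proof.
move=> le_hh; have [i [n pow_i]] := pow_periodic (@fcomp Q) (fid Q) h.
exists n => _ /(subsetP (Imf_pow i le_hh)) /imsetP [p _ ->].
have pow_iS : fpow h i.+1 = fpow h (n.+1 + i.+1).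
  have -> : n.+1 + i.+1 = (i + n.+1).+1 by rewrite addnC addSn.
  by rewrite !(powSr fcompA fid_comp comp_fid) pow_i.
by rewrite [in RHS]pow_iS (powD fcompA fid_comp) [in RHS]ffunE.
Qed.

Variable M : {set {ffun Q -> Q}}.
Hypothesis monoidM : is_monoid (mem M) (@fcomp Q) (fid Q).

Lemma comp_in f g : f \in M -> g \in M -> fcomp f g \in M.
Proof. by case: monoidM => _ MM _ _ _; apply: MM. Qed.

Lemma le1_sqle f g : f \in M -> g \in M -> le1 (mem M) (@fcomp Q) f g -> sqle f g.
Proof.
move=> Mf Mg /(le1P monoidM Mf Mg) [z _ def_f].
by rewrite /sqle {1}def_f; apply: Imf_compS.
Qed.

Lemma sqle_le1 f g : f \in M -> g \in M ->
  sqle f g -> sqle (fcomp f g) (fcomp f g) -> le1 (mem M) (@fcomp Q) f g.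
Proof.
move=> Mf Mg le_fg le_hh; have [n fix_h] := pow_fix_Imf le_hh.
apply/(le1P monoidM Mf Mg); exists (fcomp (fpow (fcomp f g) n) f).
  by apply: comp_in => //; apply: (pow_in _ monoidM); apply: comp_in.
apply/ffunP => q; rewrite fcompA -powS ffunE fix_h //.
by apply: (subsetP le_fg); apply: imset_f.
Qed.

Lemma total_le1_sqle :
  total_on (mem M) (le1 (mem M) (@fcomp Q)) <-> total_on (mem M) (@sqle Q).
Proof.
split=> tot f g Mf Mg.
  by case: (tot f g Mf Mg) => [/(le1_sqle Mf Mg) | /(le1_sqle Mg Mf)]; [left | right].
have le_hh h : h \in M -> sqle h h by move=> Mh; case: (tot h h Mh Mh).
by case: (tot f g Mf Mg) => le; [left | right]; apply: sqle_le1 => //; apply/le_hh/comp_in.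
Qed.

End FunctionMonoid.

Theorem lemma4p1 :
  (forall (T : finType) (mul : T -> T -> T) (one : T),
     is_monoid predT mul one ->
     [/\ (total_on predT (le1 predT mul) <-> total_on predT (le2 predT mul)),
         (total_on predT (le1 predT mul) <-> total_on predT (le3 predT mul)),
         (total_on predT (le1 predT mul) <-> cond4 predT mul) &
         (total_on predT (le1 predT mul) \/ total_on predT (le2 predT mul) \/
          total_on predT (le3 predT mul) \/ cond4 predT mul ->
          forall x y : T, (le1 predT mul x y <-> le2 predT mul x y) /\
                          (le1 predT mul x y <-> le3 predT mul x y))]) /\
  (forall (Q : finType) (M : {set {ffun Q -> Q}}),
     is_monoid (mem M) (@fcomp Q) (fid Q) ->
     (total_on (mem M) (le1 (mem M) (@fcomp Q)) <->
      total_on (mem M) (@sqle Q))).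
Proof.
split=> [T mul one monoidT | Q M]; last exact: total_le1_sqle.
have cond4_total := (total_le1E monoidT, total_le2E monoidT, total_le3E monoidT).
split; rewrite ?cond4_total // => some_cond x y.
have C : cond4 predT mul by case: some_cond => [|[|[|]]].
by rewrite (cond4_le1 monoidT C) (cond4_le2 monoidT C) (cond4_le3 C).
Qed.
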